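(* Let $a, b$ be positive integers with $b>1$ and let $i\ge 2$ be an integer with $\gcd(r_b(i),a)=1$. Then \[\sum_{\omega \in \operatorname{Ap}(S_a(b,i))} \omega = \sum_{j=2}^i \frac{b^i + b^{i-(j-1)}}{2}\, a^{(i)}_j.\]
   Context: For $\ell \ge 1$, $r_b(\ell) = \sum_{j=0}^{\ell-1} b^j$, and $r_b(0)=0$. For integers $m\ge 2$ and $j \ge 1$, $a^{(m)}_j := r_b(m) + a\, r_b(j-1)$, and $S_a(b,m)$ is the submonoid of $\mathbb{N}$ generated by $\{a^{(m)}_j : j\ge 1\}$ (a numerical semigroup with multiplicity $r_b(m)$ when $\gcd(r_b(m),a)=1$). $\operatorname{Ap}(S) = \{\omega\in S : \omega - \operatorname{m}(S) \notin S\}$ with $\operatorname{m}(S)$ the smallest nonzero element of $S$. *)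

From mathcomp Require Import all_boot.
Set Implicit Arguments. Unset Strict Implicit. Unset Printing Implicit Defensive.

Definition repunit (b l : nat) : nat := \sum_(0 <= j < l) b ^ j.

Definition agen (a b m j : nat) : nat := repunit b m + a * repunit b (j - 1).

Inductive inS (a b m : nat) : nat -> Prop :=
  | inS0 : inS a b m 0
  | inSadd (j x : nat) : 1 <= j -> inS a b m x -> inS a b m (agen a b m j + x).

Definition is_multiplicity (S : nat -> Prop) (mS : nat) : Prop :=
  [/\ S mS, 0 < mS & forall x, S x -> 0 < x -> mS <= x].

(* Apery set w.r.t. the multiplicity: w in S and w - m(S) not in S
   (w - m(S) is meant as an integer; it is in S only if m(S) <= w). *)
Definition Apery (S : nat -> Prop) (w : nat) : Prop :=
  exists mS, is_multiplicity S mS /\ S w /\ ~ (mS <= w /\ S (w - mS)).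

From mathcomp Require Import all_boot zify.
Set Implicit Arguments. Unset Strict Implicit. Unset Printing Implicit Defensive.

(* Put m := r_b(i).  Every element of S_a(b,i) is congruent to a*N modulo m for
   some N < m, where N is a sum of C repunits r_b(l), 1 <= l < i, and the element
   is then at least a*N + m*C.  The greedy decomposition of N into repunits
   (divide by r_b(i-1), then by r_b(i-2), ...) minimises C, so the Apery set
   consists of the m elements a*N + m*G(N), G(N) the greedy count; they are
   distinct since gcd(m, a) = 1.  Summing the greedy digits over all N < m
   digit by digit gives the coefficients (b^i + b^(i-j+1))/2. *)

Lemma repunit0 b : repunit b 0 = 0. Proof. by rewrite /repunit big_geq. Qed.

Lemma repunitS b n : repunit b n.+1 = 1 + b * repunit b n.
Proof.
rewrite /repunit big_nat_recl // expn0 big_distrr /=.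
by congr (_ + _); apply: eq_bigr => j _; rewrite expnS.
Qed.

Lemma repunitSr b n : repunit b n.+1 = repunit b n + b ^ n.
Proof. by rewrite /repunit big_nat_recr. Qed.

Lemma repunit1 b : repunit b 1 = 1. Proof. by rewrite repunitS repunit0 muln0. Qed.

Lemma repunitD b m n : repunit b (m + n) = repunit b m + b ^ m * repunit b n.
Proof.
elim: n => [|n IHn]; first by rewrite addn0 repunit0 muln0 addn0.
by rewrite addnS !repunitSr IHn expnD mulnDr addnA.
Qed.

Lemma leq_repunit b m n : m <= n -> repunit b m <= repunit b n.
Proof. by move=> le_mn; rewrite -(subnKC le_mn) repunitD leq_addr. Qed.

Lemma repunit_ltS b n : 0 < b -> repunit b n < repunit b n.+1.
Proof. by move=> b_gt0; rewrite repunitSr -addn1 leq_add2l expn_gt0 b_gt0. Qed.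

Lemma repunit_gt0 b n : 0 < repunit b n.+1.
Proof. by rewrite repunitS. Qed.

Lemma sum_id_mul2 n : 2 * \sum_(0 <= e < n) e = n * n.-1.
Proof.
elim: n => [|n IHn]; first by rewrite big_geq.
by rewrite big_nat_recr //= mulnDr IHn; case: n {IHn} => //; nia.
Qed.

Lemma sum_nat_mul (F : nat -> nat) d R :
  \sum_(0 <= N < d * R) F N = \sum_(0 <= e < d) \sum_(0 <= t < R) F (e * R + t).
Proof.
elim: d => [|d IHd]; first by rewrite mul0n !big_geq.
rewrite big_nat_recr //= mulSn addnC (@big_cat_nat _ _ _ (d * R)) //=; last lia.
rewrite IHd -{1}[d * R]add0n big_addn addKn.
by congr (_ + _); apply: eq_bigr => t _; rewrite addnC.
Qed.

(** * Sums of repunits *)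

Section SumsOfRepunits.
Variable b : nat.

Inductive repunit_sum (L : nat) : nat -> nat -> Prop :=
| repunit_sum0 : repunit_sum L 0 0
| repunit_sumS l C N : 0 < l <= L -> repunit_sum L C N ->
    repunit_sum L C.+1 (repunit b l + N).

Lemma repunit_sum_widen L L' C N :
  L <= L' -> repunit_sum L C N -> repunit_sum L' C N.
Proof.
move=> le_LL'; elim=> [|l C0 N0 hl _ IH]; first exact: repunit_sum0.
by apply: repunit_sumS IH; lia.
Qed.

Lemma repunit_sum_copies L l t C N : 0 < l <= L -> repunit_sum L C N ->
  repunit_sum L (t + C) (t * repunit b l + N).
Proof.
move=> hl HN; elim: t => [|t IH] //.
by rewrite mulSn -addnA; apply: repunit_sumS.
Qed.

Lemma repunit_sum_max1 C N : repunit_sum 1 C N -> N = C.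
Proof.
elim=> // l C0 N0 hl _ ->.
have -> : l = 1 by lia.
by rewrite repunit1.
Qed.

Lemma repunit_sum_splitS L C N : repunit_sum L.+1 C N ->
  exists c C' Y, [/\ C = c + C', N = c * repunit b L.+1 + Y & repunit_sum L C' Y].
Proof.
elim=> [|l C0 N0 hl _ [c [C' [Y [-> -> HY]]]]].
  by exists 0, 0, 0; split=> //; apply: repunit_sum0.
have [lt_lL|ge_lL] := ltnP l L.+1.
  exists c, C'.+1, (repunit b l + Y); split; try lia.
  by apply: repunit_sumS HY; lia.
have -> : l = L.+1 by lia.
by exists c.+1, C', Y; split=> //; rewrite mulSn; lia.
Qed.

(* r_b(l) - 1 = b * r_b(l-1), so subtracting 1 replaces one summand by b. *)
Lemma repunit_sum_pred L C N : repunit_sum L C N -> 0 < N ->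
  exists C', C' + 1 <= C + b /\ repunit_sum L C' N.-1.
Proof.
case=> [//|[|[|l]] C0 N0 hl HN0 _]; first lia.
  by exists C0; split; [lia | rewrite repunit1 add1n].
exists (b + C0); split; first lia.
have -> : (repunit b l.+2 + N0).-1 = b * repunit b l.+1 + N0 by rewrite repunitS; lia.
by apply: repunit_sum_copies HN0; lia.
Qed.

(* Parametrised by the one-step property, so that it can be used inside the
   induction proving that property. *)
Lemma repunit_sum_subMn L :
  (forall C N, repunit_sum L C N -> repunit b L.+1 <= N ->
     exists C', C'.+1 <= C /\ repunit_sum L C' (N - repunit b L.+1)) ->
  forall t C N, repunit_sum L C N -> t * repunit b L.+1 <= N ->
     exists C', C' + t <= C /\ repunit_sum L C' (N - t * repunit b L.+1).
Proof.
move=> sub1; elim=> [|t IHt] C N HN le_tN.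
  by exists C; rewrite addn0 mul0n subn0.
rewrite mulSn in le_tN *.
have [C1 [lt_C1 HC1]] := sub1 C N HN ltac:(lia).
have [C2 [le_C2 HC2]] := IHt C1 _ HC1 ltac:(lia).
by exists C2; split; [lia | rewrite subnDA].
Qed.

(* If r_b(L) occurs at least b+1 times, use (b+1) r_b(L) = r_b(L+1) + b r_b(L-1);
   otherwise take away r_b(L+1) = b r_b(L) + 1 piece by piece, the copies of
   r_b(L) missing from the sum being paid for by the induction hypothesis. *)
Lemma repunit_sum_subn L C N : repunit_sum L C N -> repunit b L.+1 <= N ->
  exists C', C'.+1 <= C /\ repunit_sum L C' (N - repunit b L.+1).
Proof.
elim: L C N => [|L IHL] C N HN le_N.
  by case: HN le_N => [|l C0 N0 hl]; [rewrite repunit1 | lia].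
have [c [C' [Y [eC eN HY]]]] := repunit_sum_splitS HN.
have eR2 : repunit b L.+2 = 1 + b * repunit b L.+1 by rewrite repunitS.
have eR1 : repunit b L.+1 = 1 + b * repunit b L by rewrite repunitS.
have [lt_bc|le_cb] := leqP b.+1 c.
  have [C2 [le_C2 HC2]] : exists C2,
      C2 <= b + C' /\ repunit_sum L.+1 C2 (b * repunit b L + Y).
    case: L {IHL HN le_N eN eR2 eR1} HY => [|L] HY.
      exists C'; rewrite repunit0 muln0 add0n.
      by split; [lia | apply: repunit_sum_widen HY].
    by exists (b + C'); split=> //; apply: repunit_sum_copies (repunit_sum_widen _ HY); lia.
  exists (c - b.+1 + C2); split; first lia.
  have -> : N - repunit b L.+2 = (c - b.+1) * repunit b L.+1 + (b * repunit b L + Y).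
    have ec : c = c - b.+1 + b.+1 by lia.
    by rewrite eN {1}ec eR2 mulnDl mulSn; lia.
  by apply: repunit_sum_copies HC2; lia.
have eb : b * repunit b L.+1 = c * repunit b L.+1 + (b - c) * repunit b L.+1.
  by rewrite -mulnDl subnKC // ltnW.
have [C'' [le_C'' HC'']] := @repunit_sum_subMn L IHL (b - c) C' Y HY ltac:(lia).
have [C3 [le_C3 HC3]] := repunit_sum_pred HC'' ltac:(lia).
exists C3; split; first lia.
have -> : N - repunit b L.+2 = (Y - (b - c) * repunit b L.+1).-1 by lia.
exact: repunit_sum_widen HC3.
Qed.

(** * The greedy decomposition *)

(* [greedy_digit k j N]: the multiplicity of r_b(j+1) in the greedy
   decomposition of N into repunits r_b(1), ..., r_b(k+1). *)
Fixpoint greedy_digit (k j N : nat) : nat :=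
  match k with
  | 0 => if j == 0 then N else 0
  | k'.+1 => if j == k'.+1 then N %/ repunit b k'.+2
             else greedy_digit k' j (N %% repunit b k'.+2)
  end.

Definition greedy_count k N := \sum_(j < k.+1) greedy_digit k j N.

Lemma greedy_count0 N : greedy_count 0 N = N.
Proof. by rewrite /greedy_count big_ord1. Qed.

Lemma greedy_countS k N :
  greedy_count k.+1 N = N %/ repunit b k.+2 + greedy_count k (N %% repunit b k.+2).
Proof.
rewrite /greedy_count big_ord_recr /= eqxx addnC; congr (_ + _).
by apply: eq_bigr => j _ /=; rewrite ltn_eqF.
Qed.

Lemma greedy_digit0 k j : greedy_digit k j 0 = 0.
Proof.
elim: k => [|k IHk] /=; first by case: (j == 0).
by rewrite div0n mod0n IHk; case: (j == k.+1).
Qed.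

Lemma greedy_digitK k N :
  \sum_(j < k.+1) greedy_digit k j N * repunit b j.+1 = N.
Proof.
elim: k N => [|k IHk] N; first by rewrite big_ord1 /= repunit1 muln1.
rewrite big_ord_recr /= eqxx.
rewrite (eq_bigr (fun j : 'I_k.+1 =>
           greedy_digit k j (N %% repunit b k.+2) * repunit b j.+1)).
  by rewrite IHk addnC -divn_eq.
by move=> j _ /=; rewrite ltn_eqF.
Qed.

Lemma greedy_count_min k C N : repunit_sum k.+1 C N -> greedy_count k N <= C.
Proof.
elim: k C N => [|k IHk] C N HN; first by rewrite greedy_count0 (repunit_sum_max1 HN).
rewrite greedy_countS.
have [c [C' [Y [eC eN HY]]]] := repunit_sum_splitS HN.
set R := repunit b k.+2.
have R_gt0 : 0 < R by apply: repunit_gt0.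
have eNR : N = N %/ R * R + N %% R by apply: divn_eq.
have le_c : c <= N %/ R by rewrite leq_divRL //; lia.
have eqR : N %/ R * R = c * R + (N %/ R - c) * R by rewrite -mulnDl subnKC.
have [C'' [le_C'' HC'']] :=
  @repunit_sum_subMn k.+1 (@repunit_sum_subn k.+1) (N %/ R - c) C' Y HY ltac:(lia).
rewrite (_ : Y - (N %/ R - c) * repunit b k.+2 = N %% R) in HC''; last by rewrite -/R; lia.
by have := IHk _ _ HC''; lia.
Qed.

(* Among the N < r_b(k+2), the top digit N / r_b(k+1) takes each value e < b
   exactly r_b(k+1) times and the value b once, for N = r_b(k+2) - 1; below
   the top the digits run periodically through those of N mod r_b(k+1). *)
Lemma sum_greedy_digit k j : 0 < b -> j <= k ->
  2 * \sum_(0 <= N < repunit b k.+2) greedy_digit k j N = b ^ k.+2 + b ^ (k.+1 - j).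
Proof.
move=> b_gt0; elim: k j => [|k IHk] j le_jk.
  have -> : j = 0 by lia.
  rewrite (eq_bigr id) // sum_id_mul2 repunitS repunit1 /= subn0 expn1; nia.
set R := repunit b k.+2.
have R_gt0 : 0 < R by apply: repunit_gt0.
rewrite (repunitS b k.+2) -/R addnC addn1 big_nat_recr //= sum_nat_mul.
rewrite (eq_bigr (fun e => \sum_(0 <= t < R)
           (if j == k.+1 then e else greedy_digit k j t))); last first.
  move=> e _; apply: eq_big_nat => t /andP [_ lt_tR].
  by rewrite divnMDl // modnMDl (divn_small lt_tR) (modn_small lt_tR) addn0.
have eR : 1 + b * R = R + b ^ k.+2 by rewrite -repunitS repunitSr.
case: eqP => [->|ne_jk].
  rewrite subSn // subnn expn1 (eq_bigr (fun e => e * R)); last first.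
    by move=> e _; rewrite sum_nat_const_nat subn0 mulnC.
  rewrite -big_distrl /= mulnDr mulnA sum_id_mul2 mulnK // expnS.
  clearbody R; clear IHk; case: b b_gt0 eR => [//|b'] _ eR /=; nia.
rewrite (eq_bigr (fun e => \sum_(0 <= t < R) greedy_digit k j t)) //.
rewrite sum_nat_const_nat subn0 -/R modnMl greedy_digit0 addn0 mulnCA IHk; last lia.
by rewrite (_ : k.+2 - j = (k.+1 - j).+1) ?mulnDr -?expnS //; lia.
Qed.

End SumsOfRepunits.

(** * The semigroup S_a(b,i) *)

Lemma inS_add a b m x y : inS a b m x -> inS a b m y -> inS a b m (x + y).
Proof.
move=> Sx Sy; elim: Sx => [|j x0 hj _ IH]; first by rewrite add0n.
by rewrite -addnA; apply: inSadd.
Qed.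

Lemma inS_mul a b m j c : 1 <= j -> inS a b m (c * agen a b m j).
Proof.
move=> hj; elim: c => [|c IHc]; first exact: inS0.
by rewrite mulSn; apply: inSadd.
Qed.

Lemma inS_mul_repunit a b m t : inS a b m (t * repunit b m).
Proof.
have <- : agen a b m 1 = repunit b m by rewrite /agen subnn repunit0 muln0 addn0.
exact: inS_mul.
Qed.

Lemma inS_ge_repunit a b m x : inS a b m x -> 0 < x -> repunit b m <= x.
Proof. by case=> [//|j x0 _ _ _]; rewrite /agen -addnA leq_addr. Qed.

Lemma is_multiplicity_inS a b m : 0 < repunit b m ->
  is_multiplicity (inS a b m) (repunit b m).
Proof.
move=> m_gt0; split=> //; last exact: inS_ge_repunit.
by rewrite -[repunit b m]mul1n; apply: inS_mul_repunit.
Qed.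

Lemma is_multiplicity_uniq (S : nat -> Prop) m m' :
  is_multiplicity S m -> is_multiplicity S m' -> m = m'.
Proof.
by move=> [Sm m_gt0 m_min] [Sm' m'_gt0 m'_min]; apply/eqP; rewrite eqn_leq m_min ?m'_min.
Qed.

Lemma repunit_mod b L l :
  exists l' t, l' <= L /\ repunit b l = repunit b l' + repunit b L.+1 * t.
Proof.
elim/ltn_ind: l => l IH.
have [le_lL|lt_Ll] := leqP l L; first by exists l, 0; split; lia.
have [l' [t [le_l' el']]] := IH (l - L.+1) ltac:(lia).
exists l', (t + b ^ (l - L.+1)); split=> //.
by rewrite -{1}(subnK lt_Ll) repunitD el'; lia.
Qed.

Lemma inS_decomp a b L x : 0 < b -> inS a b L.+1 x ->
  exists N C q, [/\ N < repunit b L.+1, repunit_sum b L C N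
                  & x = a * N + repunit b L.+1 * (C + q)].
Proof.
move=> b_gt0; elim=> [|j x0 hj _ [N [C [q [lt_N HN ->]]]]].
  exists 0, 0, 0; split=> //; [exact: repunit_gt0 | exact: repunit_sum0 | lia].
have [[|l] [t [le_l el]]] := repunit_mod b L (j - 1).
  by exists N, C, (q + 1 + a * t); split=> //; rewrite /agen el repunit0; lia.
set m := repunit b L.+1 in lt_N el *.
rewrite /agen el -/m.
have HM : repunit_sum b L C.+1 (repunit b l.+1 + N) by apply: repunit_sumS HN; lia.
have lt_lm : repunit b l.+1 < m by apply: leq_ltn_trans (leq_repunit b le_l) (repunit_ltS _ _).
have [lt_M|ge_M] := ltnP (repunit b l.+1 + N) m.
  by exists (repunit b l.+1 + N), C.+1, (q + a * t); split=> //; lia.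
have [C' [lt_C' HC']] := repunit_sum_subn HM ge_M.
exists (repunit b l.+1 + N - m), C', (C.+1 - C' + q + a * t + a); split=> //; first lia.
have e : a * (repunit b l.+1 + N - m) + a * m = a * (repunit b l.+1 + N).
  by rewrite -mulnDr subnK.
lia.
Qed.

Lemma coprime_lin_inj m a N N' X Y : coprime m a -> N < m -> N' < m ->
  a * N + m * X = a * N' + m * Y -> N = N'.
Proof.
move=> co_ma lt_N lt_N' e.
wlog le_NN' : N N' X Y lt_N lt_N' e / N <= N'.
  move=> H; have [le|lt] := leqP N N'; first exact: (H _ _ X Y).
  by symmetry; apply: (H N' N Y X) => //; apply: ltnW.
have : m %| a * (N' - N).
  by rewrite (_ : a * (N' - N) = m * (X - Y)) ?dvdn_mulr // !mulnBr; lia.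
rewrite Gauss_dvdr // => dvd_m.
have [|/dvdn_leq/(_ dvd_m)] := posnP (N' - N); lia.
Qed.

(** * The Apery set *)

Section Apery.
Variables a b n : nat.
Let m := repunit b n.+2.

Definition apery_elt N := a * N + m * greedy_count b n N.

Lemma apery_eltE N :
  apery_elt N = \sum_(j < n.+1) greedy_digit b n j N * agen a b n.+2 j.+2.
Proof.
rewrite /apery_elt /agen.
under eq_bigr do rewrite subSS subn0 mulnDr mulnCA.
rewrite big_split /= -big_distrl -big_distrr /= greedy_digitK addnC mulnC.
by congr (_ + _); rewrite mulnC.
Qed.

Lemma inS_apery_elt N : inS a b n.+2 (apery_elt N).
Proof.
rewrite apery_eltE; apply: (big_ind (inS a b n.+2)) => //; first exact: inS0.
  exact: inS_add.
by move=> j _; apply: inS_mul.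
Qed.

Lemma inS_apery_decomp x : 0 < b -> inS a b n.+2 x ->
  exists N k, N < m /\ x = apery_elt N + m * k.
Proof.
move=> b_gt0 Sx; have [N [C [q [lt_N HN ->]]]] := inS_decomp b_gt0 Sx.
have le_G := greedy_count_min HN.
exists N, (C - greedy_count b n N + q); split=> //.
by rewrite /apery_elt -addnA -mulnDr; congr (_ + _ * _); lia.
Qed.

Lemma apery_elt_inj N N' k : coprime m a -> N < m -> N' < m ->
  apery_elt N = apery_elt N' + m * k -> N = N' /\ k = 0.
Proof.
move=> co_ma lt_N lt_N'; rewrite /apery_elt -addnA -mulnDr => e.
have eN := coprime_lin_inj co_ma lt_N lt_N' e; subst N'; split=> //.
by move/eqP: e; rewrite eqn_add2l eqn_mul2l /m eqn0Ngt repunit_gt0 /=; lia.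
Qed.

Lemma Apery_inS w : 0 < b -> coprime m a ->
  Apery (inS a b n.+2) w <-> exists2 N, N < m & w = apery_elt N.
Proof.
move=> b_gt0 co_ma; have m_gt0 : 0 < m by apply: repunit_gt0.
split.
- move=> [mS [mult_mS [Sw not_pred]]].
  have emS : mS = m := is_multiplicity_uniq mult_mS (is_multiplicity_inS a m_gt0).
  subst mS.
  have [N [[|k] [lt_N ew]]] := inS_apery_decomp b_gt0 Sw; subst w.
    by exists N; rewrite // muln0 addn0.
  exfalso; apply: not_pred; split; first by rewrite mulnS; lia.
  have -> : apery_elt N + m * k.+1 - m = apery_elt N + k * m by rewrite mulnS mulnC; lia.
  exact: inS_add (inS_apery_elt N) (inS_mul_repunit _ _ _ _).
- move=> [N lt_N ->]; exists m; split; first exact: is_multiplicity_inS.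
  split; first exact: inS_apery_elt.
  move=> [le_m /(inS_apery_decomp b_gt0) [N' [k [lt_N' ek]]]].
  have e : apery_elt N = apery_elt N' + m * k.+1 by rewrite mulnS; lia.
  by have [_] := apery_elt_inj co_ma lt_N lt_N' e.
Qed.

Lemma sum_apery_elt : 0 < b ->
  \sum_(0 <= N < m) apery_elt N =
  \sum_(j < n.+1) ((b ^ n.+2 + b ^ (n.+1 - j)) %/ 2) * agen a b n.+2 j.+2.
Proof.
move=> b_gt0; under eq_bigr do rewrite apery_eltE.
rewrite exchange_big /=; apply: eq_bigr => j _.
by rewrite -big_distrl /= -(@sum_greedy_digit b n j b_gt0 (ltn_ord j)) mulKn.
Qed.

End Apery.

Theorem corollary25 (a b i : nat) :
  0 < a -> 1 < b -> 2 <= i -> coprime (repunit b i) a ->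
  exists s : seq nat,
    [/\ uniq s,
        (forall w, w \in s <-> Apery (inS a b i) w) &
        \sum_(w <- s) w =
          \sum_(2 <= j < i.+1) ((b ^ i + b ^ (i - (j - 1))) %/ 2) * agen a b i j].
Proof.
move=> _ b_gt1; case: i => [|[|n]] // _ co_ma.
have b_gt0 := ltnW b_gt1.
exists [seq apery_elt a b n N | N <- index_iota 0 (repunit b n.+2)]; split.
- rewrite map_inj_in_uniq ?iota_uniq // => N N'.
  rewrite !mem_index_iota => /andP [_ lt_N] /andP [_ lt_N'] e.
  by case: (apery_elt_inj co_ma lt_N lt_N' (k := 0)); rewrite ?muln0 ?addn0.
- move=> w; rewrite (Apery_inS w b_gt0 co_ma); split.
    by case/mapP=> N; rewrite mem_index_iota => /andP [_ lt_N] ->; exists N.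
  by case=> N lt_N ->; apply: map_f; rewrite mem_index_iota.
- rewrite big_map (sum_apery_elt a n b_gt0) [RHS](big_addn 0 _ 2) big_mkord.
  by apply: eq_bigr => j _; rewrite addn2 !subSS subn0.
Qed.
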